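(* Let $\mu$ be the local limit of a locally convergent sequence of finite graphs, and let $\mathcal E$ be a local event on rooted graphs. Then for every $\delta>0$, $r\in\mathbb N$ and $p\in[0,1]$ there is a constant $D\in\mathbb N$ (depending on $\delta$ and $r$) such that $$\Pr\big(\exists u\in\mathcal N_r(o;G)\text{ with }\mathcal E(G(p),u)\big)\le D\,\Pr\big(\mathcal E(G(p),o)\big)+\delta,$$ where probabilities are over $(G,o)\sim\mu$ and the independent percolation.
   Context: $\mathcal N_r(v;G)$ is the subgraph induced by vertices within graph distance $r$ of $v$. A local event $\mathcal E$ is a set of rooted graphs such that whether $(G,u)\in\mathcal E$ (written $\mathcal E(G,u)$) is determined by the isomorphism class of $\mathcal N_R(u;G)$ rooted at $u$, for some fixed $R$. $G(p)$: independent bond percolation with retention probability $p$. Local convergence: $\mathcal G^*$ is the space of rooted locally finite graphs modulo root-preserving isomorphism with the local metric; $G_n$ ($n$ vertices) converges locally to a probability measure $\mu$ on $\mathcal G^*$ if $\frac1n\sum_v f(G_n,v)\to\mathbb E_\mu[f]$ in probability for all bounded continuous $f$ (such limits are unimodular). *)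

From HB Require Import structures.
From mathcomp Require Import all_boot all_order all_algebra.
From mathcomp Require Import all_classical all_reals all_analysis.
Set Implicit Arguments. Unset Strict Implicit. Unset Printing Implicit Defensive.
Import Order.TTheory GRing.Theory Num.Theory.
Import numFieldNormedType.Exports.
Local Open Scope classical_set_scope.
Local Open Scope ring_scope.

(* The (simple, undirected) adjacency of G is
     adj G i j  <=>  i <> j  and  G.1 (min i j) (max i j),
   so only the entries G.1 i j with i < j are meaningful.  Vertices not in
   the component of the root are irrelevant for everything below (local
   notions only see the root's component).                              *)
Definition RGraph : Type := ((nat -> nat -> bool) * nat)%type.

Definition groot (G : RGraph) : nat := G.2.
Definition adj (G : RGraph) (i j : nat) : bool :=
  (i != j) && G.1 (minn i j) (maxn i j).
Definition reroot (G : RGraph) (u : nat) : RGraph := (G.1, u).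

Fixpoint inball (G : RGraph) (r : nat) (v : nat) : Prop :=
  match r with
  | 0 => v = groot G
  | r'.+1 => inball G r' v \/ exists w, inball G r' w /\ adj G w v
  end.

Definition ball_iso (r : nat) (G H : RGraph) : Prop :=
  exists phi psi : nat -> nat,
    [/\ phi (groot G) = groot H,
        (forall v, inball G r v -> inball H r (phi v) /\ psi (phi v) = v),
        (forall w, inball H r w -> inball G r (psi w) /\ phi (psi w) = w) &
        (forall v w, inball G r v -> inball G r w ->
           adj H (phi v) (phi w) = adj G v w)].

Definition locally_finite (G : RGraph) : Prop :=
  forall v, exists n, forall w, adj G v w -> (w < n)%N.

Definition local_event (E : RGraph -> Prop) : Prop :=
  exists R : nat, forall G H, ball_iso R G H -> (E G <-> E H).

(* Measurable structure: the sigma-algebra generated by the cylinder sets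
   {G | G.1 i j = b} and {G | root = k} (the product sigma-algebra). *)
Definition cylinders : set (set RGraph) :=
  [set A | (exists i j b, A = [set G : RGraph | G.1 i j = b]) \/
           (exists k, A = [set G : RGraph | G.2 = k])].

Definition RGraphM := g_sigma_algebraType cylinders.

(* bounded, and continuous for the local metric on G* (locally finite
   rooted graphs), written out: for every (G,o) and eps > 0 there is r such
   that every (H,o') whose r-ball is rooted-isomorphic to that of (G,o)
   satisfies |f H - f G| < eps. *)
Definition bounded_local_continuous {R : realType} (f : RGraph -> R) : Prop :=
  (exists M : R, forall G, locally_finite G -> `|f G| <= M) /\
  (forall G, locally_finite G -> forall eps : R, 0 < eps ->
     exists r : nat, forall H, locally_finite H -> ball_iso r G H ->
       `|f H - f G| < eps).

(* The n-th finite graph has vertex set {0,..,n-1}: edges outside are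
   discarded; rooted at v. *)
Definition fin_rgraph (e : nat -> nat -> bool) (n v : nat) : RGraph :=
  (fun i j => [&& (i < n)%N, (j < n)%N & e i j], v).

(* G_n (n vertices, edge indicator Gs n) converges locally to mu:
   mu is a probability measure on (locally finite) rooted graphs, and
   (1/n) sum_v f(G_n, v) --> E_mu[f] for all bounded continuous f. *)
Definition local_limit {R : realType} (Gs : nat -> nat -> nat -> bool)
    (mu : probability RGraphM R) : Prop :=
  mu [set G : RGraphM | locally_finite G] = 1%E /\
  forall f : RGraph -> R, bounded_local_continuous f ->
    (fun n : nat => n%:R^-1 * \sum_(v < n) f (fin_rgraph (Gs n) n v))
      @ \oo --> \int[mu]_x f x.

Definition perc (G : RGraph) (w : nat -> nat -> bool) : RGraph :=
  (fun i j => G.1 i j && w i j, G.2).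

Definition ext_conf (m : nat) (w : {ffun 'I_m * 'I_m -> bool}) :
    nat -> nat -> bool :=
  fun i j => match insub i, insub j with
             | Some i', Some j' => w (i', j')
             | _, _ => false
             end.

(* probability weight of w under independent Bernoulli(p) percolation on
   the edges {i<j} of G inside {0..m-1} (non-edges are always closed) *)
Definition conf_weight {R : realType} (p : R) (G : RGraph) (m : nat)
    (w : {ffun 'I_m * 'I_m -> bool}) : R :=
  \prod_(ij : 'I_m * 'I_m)
     (if ((ij.1 < ij.2)%N && G.1 ij.1 ij.2)
      then (if w ij then p else 1 - p)
      else (if w ij then 0 else 1)).

Definition box_prob {R : realType} (p : R) (G : RGraph)
    (Q : RGraph -> Prop) (m : nat) : R :=
  \sum_(w : {ffun 'I_m * 'I_m -> bool})
     conf_weight p G w * (if `[< Q (perc G (ext_conf w)) >] then 1 else 0).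

(* For an event Q depending only on
   finitely many edges of G (as all events below do, G locally finite),
   box_prob p G Q m is eventually constant in m and equals the exact
   percolation probability; we take the limit. *)
Definition perc_prob {R : realType} (p : R) (G : RGraph)
    (Q : RGraph -> Prop) : R :=
  lim (box_prob p G Q @ \oo).

From HB Require Import structures.
From mathcomp Require Import all_boot all_order all_algebra.
From mathcomp Require Import all_classical all_reals all_analysis.
From mathcomp Require Import zify.
Import Order.TTheory GRing.Theory Num.Theory.
Import numFieldNormedType.Exports.
Local Open Scope classical_set_scope.
Local Open Scope ring_scope.
Set Implicit Arguments. Unset Strict Implicit.

(* Let E be a local event of radius R0 and Q_r(G) the event "some vertex u
   of the r-ball of the root of G satisfies E in G(p) rerooted at u".

   Q_r(G) depends only on the edges of the (r+R0)-ball of G,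
      so its percolation probability is a finite sum over the Bernoulli
      configurations of that ball, and coincides for rooted graphs with
      isomorphic (r+R0)-balls.  Hence G |-> P(Q_r(G)), G |-> P(E(G)) and the
      indicator of "the 2r-ball of the root has more than D vertices" are
      bounded and continuous for the local topology.
   2. Finite graphs.  On every finite graph, a union bound and a double
      counting (a vertex lies in the r-balls of at most D roots whose
      2r-ball has at most D vertices) give
        Σ_v P(Q_r(v)) <= #{v : |B_2r(v)| > D} + D Σ_u P(E at u).
   3. Limit.  Dividing by n and passing to the local limit gives the
      inequality for mu with error mu(|B_2r(o)| > D), which is at most delta
      for D large, since mu is concentrated on locally finite graphs. *)

Lemma adj_sym (G : RGraph) a b : adj G a b = adj G b a.
Proof. by rewrite /adj eq_sym minnC maxnC. Qed.

Lemma adj_lt (G : RGraph) a b : (a < b)%N -> adj G a b = G.1 a b.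
Proof.
move=> h; rewrite /adj; have -> : minn a b = a by lia.
have -> : maxn a b = b by lia.
by rewrite neq_ltn h.
Qed.

Lemma adj_reroot (G : RGraph) u a b : adj (reroot G u) a b = adj G a b.
Proof. by []. Qed.

Lemma inball_root (G : RGraph) k : inball G k (groot G).
Proof. by elim: k => [|k IH] //=; left. Qed.

Lemma inball_mono (G : RGraph) k k' v :
  (k <= k')%N -> inball G k v -> inball G k' v.
Proof.
move=> /subnKC <-; elim: (k' - k)%N => [|d IH]; first by rewrite addn0.
by move=> h; rewrite addnS /=; left; exact: IH.
Qed.

Lemma inball_sub (G H : RGraph) k v :
  (forall a b, adj G a b -> adj H a b) -> groot G = groot H ->
  inball G k v -> inball H k v.
Proof.
move=> sub r; elim: k v => [|k IH] v /=; first by rewrite r.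
case=> [h|[w [h a]]]; first by left; exact: IH.
by right; exists w; split; [exact: IH|exact: sub].
Qed.

Lemma inball_trans (G : RGraph) a b u v :
  inball G a u -> inball (reroot G u) b v -> inball G (a + b) v.
Proof.
move=> hu; elim: b v => [|b IH] v /=; first by move=> ->; rewrite addn0.
rewrite addnS /=; case=> [h|[w [h ad]]]; first by left; exact: IH.
by right; exists w; split; [exact: IH|].
Qed.

Lemma inball_sym (G : RGraph) k u v :
  inball (reroot G u) k v -> inball (reroot G v) k u.
Proof.
elim: k v => [|k IH] v /=; first by move=> ->.
case=> [h|[w [h ad]]]; first by left; exact: IH.
have h1 : inball (reroot G v) 1 w.
  by right; exists v; split => //; rewrite adj_sym.
by have := inball_trans h1 (IH _ h); rewrite add1n.
Qed.

Lemma perc_adj (G : RGraph) x a b :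
  adj (perc G x) a b = adj G a b && x (minn a b) (maxn a b).
Proof. by rewrite /adj /perc /= andbA. Qed.

Lemma perc_sub (G : RGraph) x a b : adj (perc G x) a b -> adj G a b.
Proof. by rewrite perc_adj => /andP[]. Qed.

Lemma ball_bounded (G : RGraph) k : locally_finite G ->
  exists N, forall v, inball G k v -> (v < N)%N.
Proof.
move=> lf.
have nbhd_bounded N : exists M, forall v w, (v < N)%N -> adj G v w -> (w < M)%N.
  elim: N => [|N [M HM]]; first by exists 0%N.
  have [n Hn] := lf N; exists (maxn M n) => v w; rewrite ltnS leq_eqVlt.
  case/orP=> [/eqP ->|hv] ha; rewrite leq_max; first by rewrite (Hn _ ha) orbT.
  by rewrite (HM _ _ hv ha).
elim: k => [|k [N HN]]; first by exists (groot G).+1 => v /= ->.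
have [M HM] := nbhd_bounded N; exists (maxn N M) => v /= [h|[w [h a]]].
  by rewrite leq_max HN.
by rewrite leq_max (HM w) ?orbT // HN.
Qed.

Definition ball_iso_by (k : nat) (G H : RGraph) (phi psi : nat -> nat) : Prop :=
  [/\ phi (groot G) = groot H,
      (forall v, inball G k v -> inball H k (phi v) /\ psi (phi v) = v),
      (forall w, inball H k w -> inball G k (psi w) /\ phi (psi w) = w) &
      (forall v w, inball G k v -> inball G k w ->
         adj H (phi v) (phi w) = adj G v w)].

Lemma ball_iso_by_sym k G H phi psi :
  ball_iso_by k G H phi psi -> ball_iso_by k H G psi phi.
Proof.
case=> r f g a; split.
- by rewrite -r; case: (f _ (inball_root G k)).
- exact: g.
- exact: f.
- move=> v w hv hw; have [hv1 hv2] := g _ hv; have [hw1 hw2] := g _ hw.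
  by rewrite -a // hv2 hw2.
Qed.

Lemma ball_iso_by_refl k G : ball_iso_by k G G id id.
Proof. by split. Qed.

Lemma transport_ball (G H : RGraph) (X : nat -> Prop) phi k :
  (forall a b, X a -> X b -> adj H (phi a) (phi b) = adj G a b) ->
  (forall v, inball G k v -> X v) -> phi (groot G) = groot H ->
  forall j v, (j <= k)%N -> inball G j v -> inball H j (phi v).
Proof.
move=> ad hX r; elim=> [|j IH] v hj /=; first by move=> ->.
case=> [h|[w [h a]]]; first by left; apply: IH => //; exact: ltnW.
right; exists (phi w); split; first by apply: IH => //; exact: ltnW.
rewrite ad //; apply: hX; first exact: (inball_mono (ltnW hj)).
by apply: (inball_mono hj); right; exists w.
Qed.

Lemma ball_iso_by_inball k G H phi psi j v :
  ball_iso_by k G H phi psi -> (j <= k)%N -> inball G j v -> inball H j (phi v).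
Proof. by case=> r _ _ a; apply: (transport_ball (X := inball G k)). Qed.

Lemma ball_iso_by_of_bij k (G H : RGraph) (X Y : nat -> Prop) phi psi :
  (forall v, X v -> Y (phi v) /\ psi (phi v) = v) ->
  (forall w, Y w -> X (psi w) /\ phi (psi w) = w) ->
  (forall a b, X a -> X b -> adj H (phi a) (phi b) = adj G a b) ->
  (forall v, inball G k v -> X v) -> (forall w, inball H k w -> Y w) ->
  phi (groot G) = groot H -> ball_iso_by k G H phi psi.
Proof.
move=> fX fY ad bX bY r.
have ad' a b : Y a -> Y b -> adj G (psi a) (psi b) = adj H a b.
  move=> ya yb; have [xa ea] := fY _ ya; have [xb eb] := fY _ yb.
  by rewrite -ad // ea eb.
have r' : psi (groot H) = groot G.
  by rewrite -r; case: (fX _ (bX _ (inball_root G k))).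
have t1 := transport_ball ad bX r; have t2 := transport_ball ad' bY r'.
split => //.
- by move=> v hv; split; [exact: t1 | case: (fX _ (bX _ hv))].
- by move=> w hw; split; [exact: t2 | case: (fY _ (bY _ hw))].
- by move=> v w hv hw; apply: ad; apply: bX.
Qed.

(* For c : I -> bool -> R, the sum
     prod_sum c h = Σ_w (Π_i c i (w i)) h w
   is the expectation of h under the product weights c. *)
Section ConfigurationSums.
Variable R : realType.

Definition flip_at (I : finType) (i0 : I) (w : {ffun I -> bool}) : {ffun I -> bool} :=
  [ffun i => if i == i0 then ~~ w i else w i].

Lemma flip_atK (I : finType) (i0 : I) : involutive (flip_at i0).
Proof.
move=> w; apply/ffunP => i; rewrite !ffunE.
by case: eqP => // ->; rewrite negbK.
Qed.

Definition prod_sum (I : finType) (c : I -> bool -> R) (h : {ffun I -> bool} -> R) :=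
  \sum_(w : {ffun I -> bool}) (\prod_i c i (w i)) * h w.

Lemma prod_sum_out (I : finType) (c : I -> bool -> R) h i0 :
  (forall w, h (flip_at i0 w) = h w) ->
  prod_sum c h = (c i0 true + c i0 false) *
    \sum_(w : {ffun I -> bool} | w i0) (\prod_(i | i != i0) c i (w i)) * h w.
Proof.
move=> hf; rewrite /prod_sum (bigID (fun w : {ffun I -> bool} => w i0)) /=.
rewrite [X in _ + X](reindex_inj (inv_inj (flip_atK i0))) /=.
rewrite [X in _ + X](eq_bigl (fun w : {ffun I -> bool} => w i0)); last first.
  by move=> w; rewrite ffunE eqxx negbK.
rewrite -big_split mulr_sumr /=; apply: eq_bigr => w wi0.
rewrite (bigD1 i0) //= (bigD1 i0 (P := predT)) //= hf ffunE eqxx wi0 /=.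
have -> : \prod_(i | i != i0) c i (flip_at i0 w i) = \prod_(i | i != i0) c i (w i).
  by apply: eq_bigr => i /negbTE hi; rewrite ffunE hi.
by rewrite -!mulrA -mulrDl.
Qed.

Lemma prod_sum_marginal (I : finType) (s : seq I) (c c' : I -> bool -> R) h :
  (forall i, i \notin s -> c i =1 c' i) ->
  (forall i, i \in s -> c i true + c i false = c' i true + c' i false) ->
  (forall i, i \in s -> forall w, h (flip_at i w) = h w) ->
  prod_sum c h = prod_sum c' h.
Proof.
elim: s c => [|a s IH] c ns ins fl.
  rewrite /prod_sum; apply: eq_bigr => w _; congr (_ * _).
  by apply: eq_bigr => i _; apply: ns.
pose c'' i := if i == a then c' i else c i.
have -> : prod_sum c h = prod_sum c'' h.
  rewrite (prod_sum_out c (fl a (mem_head _ _))).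
  rewrite (prod_sum_out c'' (fl a (mem_head _ _))).
  rewrite /c'' eqxx ins ?mem_head //; congr (_ * _); apply: eq_bigr => w _.
  by congr (_ * _); apply: eq_bigr => i /negbTE ->.
apply: IH.
- move=> i hi; rewrite /c''; case: eqP => // /eqP ia; apply: ns.
  by rewrite in_cons negb_or ia.
- move=> i hi; rewrite /c''; case: eqP => // _; apply: ins.
  by rewrite in_cons hi orbT.
- by move=> i hi; apply: fl; rewrite in_cons hi orbT.
Qed.

Definition supported (I : finType) (A : {set I}) (w : {ffun I -> bool}) :=
  [forall i, w i ==> (i \in A)].

Definition supp_sum (I : finType) (f : bool -> R) (A : {set I})
    (h : {ffun I -> bool} -> R) :=
  \sum_(w : {ffun I -> bool} | supported A w) (\prod_(i in A) f (w i)) * h w.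

Lemma prod_sum_supported (I : finType) (A : {set I}) (f : bool -> R) h :
  prod_sum (fun i b => if i \in A then f b else (if b then 0 else 1)) h =
  supp_sum f A h.
Proof.
rewrite /prod_sum /supp_sum [RHS]big_mkcond; apply: eq_bigr => w _.
rewrite (bigID (fun i => i \in A)) /=.
rewrite (eq_bigr (fun i => f (w i))); last by move=> i ->.
case hs: (supported A w).
  rewrite [X in _ * X * _]big1 ?mulr1 // => i /negbTE hi; rewrite hi.
  by move/forallP: hs => /(_ i); rewrite hi implybF => /negbTE ->.
move/negbT: hs; rewrite negb_forall => /existsP[i].
rewrite negb_imply => /andP[wi hi].
by rewrite [X in _ * X * _](bigD1 i) //= (negbTE hi) wi mul0r mulr0 mul0r.
Qed.

Definition push_conf (I J : finType) (A : {set I}) (beta : I -> J)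
    (w : {ffun I -> bool}) : {ffun J -> bool} :=
  [ffun j => [exists i in A, (beta i == j) && w i]].

Lemma push_conf_beta (I J : finType) (A : {set I}) (beta : I -> J) w i :
  {in A &, injective beta} -> i \in A -> push_conf A beta w (beta i) = w i.
Proof.
move=> binj hi; rewrite ffunE; apply/existsP/idP.
  by case=> i' /and3P[hi' /eqP /binj -> //].
by move=> wi; exists i; rewrite hi eqxx wi.
Qed.

Lemma push_conf_bij (I J : finType) (A : {set I}) (beta : I -> J) :
  {in A &, injective beta} ->
  {in [set w | supported A w]%SET &, injective (push_conf A beta)} /\
  push_conf A beta @: [set w | supported A w]%SET =
    [set w | supported (beta @: A) w]%SET.
Proof.
move=> binj; split.
  move=> w1 w2; rewrite !inE => s1 s2 e; apply/ffunP => i.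
  case hi: (i \in A).
    by rewrite -(push_conf_beta w1 binj hi) -(push_conf_beta w2 binj hi) e.
  move/forallP: s1 => /(_ i); move/forallP: s2 => /(_ i); rewrite hi !implybF.
  by move=> /negbTE -> /negbTE ->.
apply/setP => w'; rewrite !inE; apply/imsetP/idP.
  case=> w _ ->; apply/forallP => j; rewrite ffunE.
  by apply/implyP => /existsP[i /and3P[hi /eqP <- _]]; apply: imset_f.
move=> sw'; exists [ffun i => (i \in A) && w' (beta i)].
  by rewrite inE; apply/forallP => i; rewrite ffunE; apply/implyP => /andP[].
apply/ffunP => j; rewrite ffunE; apply/idP/existsP.
  move=> wj; have /imsetP[i hi ej] : j \in beta @: A.
    by move/forallP: sw' => /(_ j); rewrite wj.
  by exists i; rewrite hi ej eqxx /= ffunE hi -ej.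
by case=> i /and3P[hi /eqP <-]; rewrite ffunE => /andP[].
Qed.

Lemma supp_sum_transfer (I J : finType) (f : bool -> R) (A : {set I})
    (B : {set J}) (beta : I -> J) hA hB :
  {in A &, injective beta} -> beta @: A = B ->
  (forall w, supported A w -> hA w = hB (push_conf A beta w)) ->
  supp_sum f A hA = supp_sum f B hB.
Proof.
move=> binj <- hAB; have [injt imt] := push_conf_bij binj.
rewrite /supp_sum (eq_bigl (fun w => w \in [set w | supported (beta @: A) w]%SET));
  last by move=> w; rewrite inE.
rewrite -imt big_imset //= [RHS]big_mkcond [LHS]big_mkcond /=.
apply: eq_bigr => w _; rewrite inE; case: ifP => // sw.
rewrite -hAB //; congr (_ * _).
by rewrite big_imset //=; apply: eq_bigr => i hi; rewrite push_conf_beta.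
Qed.

End ConfigurationSums.

(* Box probabilities.  box_prob p G Q m is the probability of Q(G(x)) when
   the edges of G inside {0..m-1} are open independently with probability p.
   If Q(G(x)) only depends on x along the edges of G inside a vertex set T
   (local_on G Q T), all other edges can be summed out, and box_prob is a
   sum over configurations of the edges of G inside T (box_probE). *)
Section BoxProbabilities.
Variable R : realType.
Variable p : R.

Definition bern (b : bool) : R := if b then p else 1 - p.

Definition box_edges (G : RGraph) (T : nat -> Prop) m : {set 'I_m * 'I_m} :=
  [set ij : 'I_m * 'I_m |
     [&& (ij.1 < ij.2)%N, G.1 ij.1 ij.2, `[< T ij.1 >] & `[< T ij.2 >]]]%SET.

Definition box_ind (Q : RGraph -> Prop) (G : RGraph) m
    (w : {ffun 'I_m * 'I_m -> bool}) : R :=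
  if `[< Q (perc G (ext_conf w)) >] then 1 else 0.

Definition local_on (G : RGraph) (Q : RGraph -> Prop) (T : nat -> Prop) :=
  forall x1 x2, (forall a b, T a -> T b -> adj G a b ->
      x1 (minn a b) (maxn a b) = x2 (minn a b) (maxn a b)) ->
    (Q (perc G x1) <-> Q (perc G x2)).

Lemma ext_confE m (w : {ffun 'I_m * 'I_m -> bool}) (i j : 'I_m) :
  ext_conf w i j = w (i, j).
Proof. by rewrite /ext_conf !valK. Qed.

Lemma ext_confN m (w : {ffun 'I_m * 'I_m -> bool}) a b :
  ~~ ((a < m) && (b < m))%N -> ext_conf w a b = false.
Proof.
rewrite negb_and /ext_conf => /orP[h|h]; first by rewrite insubN.
by case: insub => // ?; rewrite insubN.
Qed.

Lemma in_box_edges (G : RGraph) (T : nat -> Prop) m (ij : 'I_m * 'I_m) :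
  reflect [/\ (ij.1 < ij.2)%N, G.1 ij.1 ij.2, T ij.1 & T ij.2]
          (ij \in box_edges G T m).
Proof.
rewrite inE; apply: (iffP and4P) => [[h1 h2 /asboolP h3 /asboolP h4]|[h1 h2 h3 h4]] //.
by split => //; apply/asboolP.
Qed.

Lemma box_probE (G : RGraph) (Q : RGraph -> Prop) (T : nat -> Prop) m :
  local_on G Q T -> box_prob p G Q m = supp_sum bern (box_edges G T m) (box_ind Q G (m:=m)).
Proof.
move=> lq; rewrite -prod_sum_supported.
rewrite /box_prob -/(prod_sum (fun (ij : 'I_m * 'I_m) b =>
   if ((ij.1 < ij.2)%N && G.1 ij.1 ij.2) then (if b then p else 1 - p)
   else (if b then 0 else 1)) (box_ind Q G (m:=m))).
pose outside := [set ij : 'I_m * 'I_m | ~~ (`[< T ij.1 >] && `[< T ij.2 >])]%SET.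
apply: (prod_sum_marginal (s := enum outside)).
- move=> ij; rewrite mem_enum inE negbK => /andP[t1 t2] b.
  by rewrite inE t1 t2 !andbT.
- move=> ij _; rewrite /bern /=.
  by case: (_ && _); case: (_ \in _); rewrite /= ?add0r // addrC subrK.
- move=> i0; rewrite mem_enum inE => hi0 w; rewrite /box_ind.
  suff -> : Q (perc G (ext_conf (flip_at i0 w))) = Q (perc G (ext_conf w)) by [].
  apply/propext; apply: lq => a b ta tb _.
  have [hab|hab] := boolP ((minn a b < m) && (maxn a b < m))%N; last first.
    by rewrite !ext_confN.
  case/andP: hab => ha hb.
  have -> : minn a b = nat_of_ord (Ordinal ha) by [].
  have -> : maxn a b = nat_of_ord (Ordinal hb) by [].
  rewrite !ext_confE ffunE; case: eqP => // e; move: hi0; rewrite -e /=.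
  have tmin : T (minn a b) by rewrite /minn; case: ifP.
  have tmax : T (maxn a b) by rewrite /maxn; case: ifP.
  by move/asboolP: tmin => ->; move/asboolP: tmax => ->.
Qed.

Hypothesis p01 : 0 <= p <= 1.

Lemma conf_weight_ge0 (G : RGraph) m (w : {ffun 'I_m * 'I_m -> bool}) :
  0 <= conf_weight p G w.
Proof.
case/andP: p01 => p0 p1; apply: prodr_ge0 => ij _.
by case: ifP => _; case: ifP => _ //; rewrite subr_ge0.
Qed.

Lemma box_ge0 (G : RGraph) Q m : 0 <= box_prob p G Q m.
Proof.
apply: sumr_ge0 => w _; apply: mulr_ge0; first exact: conf_weight_ge0.
by case: ifP.
Qed.

Lemma box_le1 (G : RGraph) Q m : box_prob p G Q m <= 1.
Proof.
apply: (@le_trans _ _ (\sum_(w : {ffun 'I_m * 'I_m -> bool}) conf_weight p G w)).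
  apply: ler_sum => w _; rewrite -[X in _ <= X]mulr1.
  by apply: ler_wpM2l; [exact: conf_weight_ge0 | case: ifP].
rewrite /conf_weight -(bigA_distr_bigA (fun (ij : 'I_m * 'I_m) (b : bool) =>
   (if ((ij.1 < ij.2)%N && G.1 ij.1 ij.2) then (if b then p else 1 - p)
    else (if b then 0 else 1)))) /=.
rewrite big1 // => ij _; rewrite big_bool /=.
by case: (_ && _); rewrite /= ?add0r // addrC subrK.
Qed.

End BoxProbabilities.

Lemma inord_minmax m a b : (a < m.+1)%N -> (b < m.+1)%N ->
  (inord (minn a b) : 'I_m.+1) = minn a b :> nat /\
  (inord (maxn a b) : 'I_m.+1) = maxn a b :> nat.
Proof. by move=> ha hb; rewrite !inordK //; lia. Qed.

Lemma edge_in_box (G : RGraph) (T : nat -> Prop) m a b :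
  T a -> T b -> (a < m.+1)%N -> (b < m.+1)%N -> adj G a b ->
  ((inord (minn a b), inord (maxn a b)) : 'I_m.+1 * 'I_m.+1) \in box_edges G T m.+1.
Proof.
move=> ta tb ha hb /andP[ne g]; have [ea eb] := inord_minmax ha hb.
apply/in_box_edges; rewrite /= ea eb; split => //.
- by move: ne; rewrite neq_ltn; lia.
- by rewrite /minn; case: ifP.
- by rewrite /maxn; case: ifP.
Qed.

Section BoxTransfer.
Variable R : realType.
Variable p : R.
Variables (G H : RGraph) (T T' : nat -> Prop) (m m' : nat) (phi psi : nat -> nat).
Hypothesis boundT : forall v, T v -> (v < m.+1)%N.
Hypothesis boundT' : forall v, T' v -> (v < m'.+1)%N.
Hypothesis phiK : forall v, T v -> T' (phi v) /\ psi (phi v) = v.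
Hypothesis psiK : forall w, T' w -> T (psi w) /\ phi (psi w) = w.
Hypothesis phi_adj : forall a b, T a -> T b -> adj H (phi a) (phi b) = adj G a b.

Definition edge_image (ij : 'I_m.+1 * 'I_m.+1) : 'I_m'.+1 * 'I_m'.+1 :=
  (inord (minn (phi ij.1) (phi ij.2)), inord (maxn (phi ij.1) (phi ij.2))).

Lemma edge_image_val a b : T a -> T b ->
  (inord (minn (phi a) (phi b)) : 'I_m'.+1) = minn (phi a) (phi b) :> nat /\
  (inord (maxn (phi a) (phi b)) : 'I_m'.+1) = maxn (phi a) (phi b) :> nat.
Proof.
move=> ta tb; apply: inord_minmax; apply: boundT'; [exact: (phiK ta).1 | exact: (phiK tb).1].
Qed.

Lemma edge_image_inj : {in box_edges G T m.+1 &, injective edge_image}.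
Proof.
move=> [i1 i2] [j1 j2] /in_box_edges[/= l1 _ ti1 ti2] /in_box_edges[/= l2 _ tj1 tj2] e.
have [ea eb] := edge_image_val ti1 ti2; have [ec ed] := edge_image_val tj1 tj2.
have e1 : minn (phi i1) (phi i2) = minn (phi j1) (phi j2).
  by rewrite -ea -ec; case: e => -> _.
have e2 : maxn (phi i1) (phi i2) = maxn (phi j1) (phi j2).
  by rewrite -eb -ed; case: e => _ ->.
have phi_eq a b : T a -> T b -> phi a = phi b -> a = b :> nat.
  by move=> ta tb eab; rewrite -(phiK ta).2 -(phiK tb).2 eab.
have [[f1 f2]|[f1 f2]] : (phi i1 = phi j1 /\ phi i2 = phi j2) \/
                         (phi i1 = phi j2 /\ phi i2 = phi j1) by lia.
  by congr pair; apply: val_inj; apply: phi_eq.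
by have := phi_eq _ _ ti1 tj2 f1; have := phi_eq _ _ ti2 tj1 f2; lia.
Qed.

Lemma edge_image_onto : edge_image @: box_edges G T m.+1 = box_edges H T' m'.+1.
Proof.
have mm_min (f : nat -> nat) a b :
    minn (f (minn a b)) (f (maxn a b)) = minn (f a) (f b).
  by have [h|h] := leqP a b; lia.
have mm_max (f : nat -> nat) a b :
    maxn (f (minn a b)) (f (maxn a b)) = maxn (f a) (f b).
  by have [h|h] := leqP a b; lia.
apply/setP => j; apply/imsetP/idP.
  case=> -[i1 i2] /in_box_edges[/= l g ti1 ti2] ->.
  have [t1 r1] := phiK ti1; have [t2 r2] := phiK ti2.
  apply: edge_in_box => //; try exact: boundT'.
  by rewrite phi_adj // adj_lt.
case: j => [j1 j2] /in_box_edges[/= l g tj1 tj2].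
have [s1 r1] := psiK tj1; have [s2 r2] := psiK tj2.
have aG : adj G (psi j1) (psi j2).
  by rewrite -phi_adj // r1 r2 adj_lt.
exists (inord (minn (psi j1) (psi j2)), inord (maxn (psi j1) (psi j2))).
  by apply: edge_in_box => //; apply: boundT.
have [ea eb] := inord_minmax (boundT s1) (boundT s2).
have tmin : T (minn (psi j1) (psi j2)) by rewrite /minn; case: ifP.
have tmax : T (maxn (psi j1) (psi j2)) by rewrite /maxn; case: ifP.
have [ec ed] := edge_image_val tmin tmax.
congr pair; apply: val_inj; rewrite /= ?ea ?eb.
  by rewrite ec mm_min r1 r2; lia.
by rewrite ed mm_max r1 r2; lia.
Qed.

Lemma box_transfer (Q Q' : RGraph -> Prop) :
  local_on G Q T -> local_on H Q' T' ->
  (forall x y, (forall a b, T a -> T b -> adj G a b ->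
       x (minn a b) (maxn a b) = y (minn (phi a) (phi b)) (maxn (phi a) (phi b))) ->
     (Q (perc G x) <-> Q' (perc H y))) ->
  box_prob p G Q m.+1 = box_prob p H Q' m'.+1.
Proof.
move=> lq lq' corr; rewrite (box_probE p _ lq) (box_probE p _ lq').
apply: (supp_sum_transfer _ edge_image_inj edge_image_onto) => w sw.
rewrite /box_ind.
suff -> : Q (perc G (ext_conf w)) =
          Q' (perc H (ext_conf (push_conf (box_edges G T m.+1) edge_image w))) by [].
apply/propext; apply: corr => a b ta tb hab.
have [ea eb] := inord_minmax (boundT ta) (boundT tb).
have hi := edge_in_box ta tb (boundT ta) (boundT tb) hab.
set i : 'I_m.+1 * 'I_m.+1 := (inord (minn a b), inord (maxn a b)) in hi.
have tmin : T (minn a b) by rewrite /minn; case: ifP.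
have tmax : T (maxn a b) by rewrite /maxn; case: ifP.
have [ec ed] := edge_image_val tmin tmax.
have -> : minn a b = i.1 by rewrite /= ea.
have -> : maxn a b = i.2 by rewrite /= eb.
have mm (f : nat -> nat) : minn (f (minn a b)) (f (maxn a b)) = minn (f a) (f b) /\
                           maxn (f (minn a b)) (f (maxn a b)) = maxn (f a) (f b).
  by have [h|h] := leqP a b; split; lia.
have -> : minn (phi a) (phi b) = (edge_image i).1 by rewrite /= ea eb ec (mm phi).1.
have -> : maxn (phi a) (phi b) = (edge_image i).2 by rewrite /= ea eb ed (mm phi).2.
rewrite !ext_confE -!surjective_pairing push_conf_beta //.
exact: edge_image_inj.
Qed.

End BoxTransfer.

Section LocalEvents.
Variable R : realType.
Variable E : RGraph -> Prop.
Variable R0 : nat.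
Hypothesis E_local : forall G H, ball_iso R0 G H -> (E G <-> E H).

Definition Qball (r : nat) (G : RGraph) : RGraph -> Prop :=
  fun Gp => exists u, inball G r u /\ E (reroot Gp u).

Lemma Qball_transfer_dir r K G H phi psi (x y : nat -> nat -> bool) :
  (r + R0 <= K)%N -> ball_iso_by K G H phi psi ->
  (forall a b, inball G K a -> inball G K b -> adj G a b ->
     x (minn a b) (maxn a b) = y (minn (phi a) (phi b)) (maxn (phi a) (phi b))) ->
  Qball r G (perc G x) -> Qball r H (perc H y).
Proof.
move=> hK bi agree [u [hu Eu]].
have hu' : inball H r (phi u) by apply: (ball_iso_by_inball bi) => //; lia.
exists (phi u); split => //; apply: (E_local _).1 Eu; exists phi, psi.
case: (bi) => _ fK gK ad.
(* phi restricted to the K-ball of G is an R0-ball isomorphism of the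
   percolated graphs rerooted at u and phi u, as R0-balls there lie in the
   K-balls *)
have ball_in (Gx : RGraph) (G0 : RGraph) z : inball G0 r z ->
    (forall a b, adj Gx a b -> adj G0 a b) ->
    forall v, inball (reroot Gx z) R0 v -> inball G0 K v.
  move=> hz sub v hv; apply: (inball_mono hK); apply: (inball_trans hz).
  exact: (inball_sub (G := reroot Gx z)).
apply: (ball_iso_by_of_bij (X := inball G K) (Y := inball H K)) => //.
- move=> v w hv hw; rewrite !adj_reroot !perc_adj ad //.
  by case hvw: (adj G v w) => //=; rewrite agree.
- by apply: ball_in hu _ => a b; apply: perc_sub.
- by apply: ball_in hu' _ => a b; apply: perc_sub.
Qed.

Lemma Qball_transfer r K G H phi psi (x y : nat -> nat -> bool) :
  (r + R0 <= K)%N -> ball_iso_by K G H phi psi ->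
  (forall a b, inball G K a -> inball G K b -> adj G a b ->
     x (minn a b) (maxn a b) = y (minn (phi a) (phi b)) (maxn (phi a) (phi b))) ->
  (Qball r G (perc G x) <-> Qball r H (perc H y)).
Proof.
move=> hK bi agree; split; first exact: Qball_transfer_dir hK bi agree.
apply: (Qball_transfer_dir hK (ball_iso_by_sym bi)) => a b ha hb hab.
case: (bi) => _ _ gK ad.
have [ga ea] := gK _ ha; have [gb eb] := gK _ hb.
by rewrite agree // -?ad ?ea ?eb.
Qed.

Lemma Qball_local r K G : (r + R0 <= K)%N -> local_on G (Qball r G) (inball G K).
Proof. by move=> hK x1 x2; apply: (Qball_transfer hK (ball_iso_by_refl K G)). Qed.

Variable p : R.

Lemma box_prob_stable r K G N m : (r + R0 <= K)%N ->
  (forall v, inball G K v -> (v < N.+1)%N) -> (N <= m)%N ->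
  box_prob p G (Qball r G) m.+1 = box_prob p G (Qball r G) N.+1.
Proof.
move=> hK bN hm.
apply: (@box_transfer R p G G (inball G K) (inball G K) m N id id) => //.
- by move=> v hv; apply: (leq_trans (bN _ hv)).
- exact: Qball_local.
- exact: Qball_local.
- by move=> x y; apply: (Qball_transfer hK (ball_iso_by_refl K G)).
Qed.

Lemma perc_prob_box r K G N : (r + R0 <= K)%N ->
  (forall v, inball G K v -> (v < N.+1)%N) ->
  perc_prob p G (Qball r G) = box_prob p G (Qball r G) N.+1.
Proof.
move=> hK bN; rewrite /perc_prob; apply: cvg_lim => //.
apply: cvg_near_cst; near=> m.
have hm : (N.+1 <= m)%N by near: m; exists N.+1.
have -> : m = m.-1.+1 by lia.
apply: (box_prob_stable hK bN); lia.
Unshelve. all: by end_near.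
Qed.

Lemma box_prob_iso r K G H phi psi N : (r + R0 <= K)%N ->
  ball_iso_by K G H phi psi ->
  (forall v, inball G K v -> (v < N.+1)%N) ->
  (forall v, inball H K v -> (v < N.+1)%N) ->
  box_prob p G (Qball r G) N.+1 = box_prob p H (Qball r H) N.+1.
Proof.
move=> hK bi bG bH; case: (bi) => _ fK gK ad.
apply: (@box_transfer R p G H (inball G K) (inball H K) N N phi psi) => //.
- exact: Qball_local.
- exact: Qball_local.
- by move=> x y; apply: (Qball_transfer hK bi).
Qed.

Lemma box_prob_Qball0 (G : RGraph) m : box_prob p G E m = box_prob p G (Qball 0 G) m.
Proof.
rewrite /box_prob; apply: eq_bigr => w _; congr (_ * _).
suff -> : E (perc G (ext_conf w)) = Qball 0 G (perc G (ext_conf w)) by [].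
apply/propext; split; first by move=> h; exists (groot G); split.
by case=> u [/= -> h].
Qed.

Lemma perc_prob_Qball0 (G : RGraph) : perc_prob p G E = perc_prob p G (Qball 0 G).
Proof.
rewrite /perc_prob (_ : box_prob p G E = box_prob p G (Qball 0 G)) //.
by apply: funext => m; exact: box_prob_Qball0.
Qed.

End LocalEvents.

(* Percolation probabilities lie in [0, 1] (limits of box probabilities;
   lim is 0 for a divergent sequence). *)
Lemma lim_in01 (R : realType) (u : nat -> R) :
  (forall m, 0 <= u m <= 1) -> 0 <= lim (u @ \oo) <= 1.
Proof.
move=> h; have [c|nc] := pselect (cvg (u @ \oo)).
  apply/andP; split.
    by apply: limr_ge => //; near=> m; case/andP: (h m).
  by apply: limr_le => //; near=> m; case/andP: (h m).
have -> : lim (u @ \oo) = 0.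
  by rewrite /lim /lim_in xgetPN // => l hl; apply: nc; exact: cvgP hl.
by rewrite lexx ler01.
Unshelve. all: by end_near.
Qed.

Lemma perc_prob_in01 (R : realType) (p : R) G Q :
  0 <= p <= 1 -> 0 <= perc_prob p G Q <= 1.
Proof.
by move=> hp; apply: lim_in01 => m; rewrite box_ge0 ?box_le1.
Qed.

(* On the graph with vertex set
   {0..n-1} rooted at v, the union bound gives
     P(Q_r) <= Σ_{u in B_r(v)} P(E at u),
   and a vertex u lies in the r-ball of at most D roots v whose 2r-ball has
   at most D vertices (these roots lie in the r-ball of u, inside the
   2r-ball of each of them). *)

Definition big_ball (r D : nat) (G : RGraph) : Prop :=
  exists s : seq nat,
    [/\ uniq s, (D < size s)%N & forall x, x \in s -> inball G (r + r) x].

Definition big_ball_ind (R : realType) (r D : nat) (G : RGraph) : R :=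
  if `[< big_ball r D G >] then 1 else 0.

Definition ball_ind (R : realType) (G : RGraph) k u : R :=
  if `[< inball G k u >] then 1 else 0.

Lemma fin_adj e n v a b : adj (fin_rgraph e n v) a b -> (a < n)%N /\ (b < n)%N.
Proof. by case/andP=> ne /and3P[h1 h2 _]; split; lia. Qed.

Lemma fin_ball e n v k u : (v < n)%N -> inball (fin_rgraph e n v) k u -> (u < n)%N.
Proof.
move=> hv; elim: k u => [|k IH] u /=; first by move=> ->.
by case=> [/IH //|[w [_ /fin_adj[]]]].
Qed.

Section FiniteGraphs.
Variable R : realType.
Variable E : RGraph -> Prop.
Variable R0 : nat.
Hypothesis E_local : forall G H, ball_iso R0 G H -> (E G <-> E H).
Variable p : R.
Hypothesis p01 : 0 <= p <= 1.
Variable r : nat.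

(* the percolated copies of the graph rooted at v and at u share their
   configuration weights, so the union bound holds configuration-wise *)
Lemma union_bound e n v : (v < n)%N ->
  box_prob p (fin_rgraph e n v) (Qball E r (fin_rgraph e n v)) n <=
  \sum_(u < n) ball_ind R (fin_rgraph e n v) r u * box_prob p (fin_rgraph e n u) E n.
Proof.
move=> hv; rewrite /box_prob.
under [in X in _ <= X]eq_bigr do rewrite mulr_sumr.
rewrite exchange_big /=; apply: ler_sum => w _.
under eq_bigr do rewrite mulrCA.
have same_weight i :
    conf_weight p (fin_rgraph e n i) w = conf_weight p (fin_rgraph e n v) w by [].
under eq_bigr do rewrite same_weight.
rewrite -mulr_sumr; apply: ler_wpM2l; first exact: conf_weight_ge0.
case: ifP => [/asboolP [u [hu he]]|_]; last first.
  by apply: sumr_ge0 => u _; apply: mulr_ge0; rewrite /ball_ind; case: ifP.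
rewrite (bigD1 (Ordinal (fin_ball hv hu))) //= /ball_ind.
have -> : `[< inball (fin_rgraph e n v) r u >] = true by apply/asboolP.
have -> : `[< E (perc (fin_rgraph e n u) (ext_conf w)) >] = true by apply/asboolP.
rewrite mul1r lerDl; apply: sumr_ge0 => i _; apply: mulr_ge0; case: ifP => //.
Qed.

Lemma count_bound e n D u :
  \sum_(v < n) (1 - big_ball_ind R r D (fin_rgraph e n v)) *
               ball_ind R (fin_rgraph e n v) r u <= D%:R.
Proof.
pose X := [set v : 'I_n | ~~ `[< big_ball r D (fin_rgraph e n v) >] &&
                          `[< inball (fin_rgraph e n v) r u >]]%SET.
have -> : \sum_(v < n) (1 - big_ball_ind R r D (fin_rgraph e n v)) *
            ball_ind R (fin_rgraph e n v) r u = \sum_(v in X) (1 : R).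
  rewrite [RHS]big_mkcond; apply: eq_bigr => v _; rewrite inE /big_ball_ind /ball_ind.
  by case: `[< big_ball _ _ _ >]; case: `[< inball _ _ _ >];
     rewrite ?subrr ?subr0 ?mul0r ?mulr0 ?mulr1.
rewrite sumr_const ler_nat.
case: (set_0Vmem X) => [->|[v0 hv0]]; first by rewrite cards0.
rewrite leqNgt; apply/negP => hD.
move: (hv0); rewrite inE => /andP[/negP small /asboolP h0]; apply: small.
apply/asboolP; exists (map val (enum X)); split.
- by rewrite map_inj_uniq ?enum_uniq //; exact: val_inj.
- by rewrite size_map -cardE.
- move=> x /mapP[v]; rewrite mem_enum inE => /andP[_ /asboolP hv] ->.
  apply: (inball_trans (u := u)) => //.
  exact: (inball_sym (G := fin_rgraph e n v)).
Qed.

Lemma finite_graph_inequality e n D :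
  \sum_(v < n) perc_prob p (fin_rgraph e n v) (Qball E r (fin_rgraph e n v)) <=
  \sum_(v < n) big_ball_ind R r D (fin_rgraph e n v) +
  D%:R * \sum_(u < n) perc_prob p (fin_rgraph e n u) E.
Proof.
case: n => [|n]; first by rewrite !big_ord0 mulr0 addr0.
set Gf := fin_rgraph e n.+1.
have bounded (v : 'I_n.+1) k u : inball (Gf v) k u -> (u < n.+1)%N.
  exact: (fin_ball (ltn_ord v)).
have percE (u : 'I_n.+1) : perc_prob p (Gf u) E = box_prob p (Gf u) E n.+1.
  rewrite perc_prob_Qball0 box_prob_Qball0.
  by apply: (perc_prob_box E_local p (K := R0)) => // w; apply: bounded.
have pointwise (v : 'I_n.+1) :
    perc_prob p (Gf v) (Qball E r (Gf v)) <= big_ball_ind R r D (Gf v) +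
    (1 - big_ball_ind R r D (Gf v)) *
      \sum_(u < n.+1) ball_ind R (Gf v) r u * perc_prob p (Gf u) E.
  rewrite (perc_prob_box E_local p (K := r + R0) (N := n)) //;
    last by move=> w; apply: bounded.
  rewrite /big_ball_ind; case: ifP => _.
    by rewrite subrr mul0r addr0; apply: box_le1.
  rewrite subr0 mul1r add0r; under eq_bigr do rewrite percE.
  exact: union_bound.
apply: (le_trans (ler_sum _ (fun v _ => pointwise v))).
rewrite big_split /= lerD2l.
under eq_bigr do rewrite mulr_sumr.
rewrite exchange_big /= mulr_sumr; apply: ler_sum => u _.
rewrite (eq_bigr (fun v : 'I_n.+1 => perc_prob p (Gf u) E *
    ((1 - big_ball_ind R r D (Gf v)) * ball_ind R (Gf v) r u))); last first.
  by move=> v _; rewrite mulrA mulrC mulrA.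
rewrite -mulr_sumr mulrC; apply: ler_wpM2r; last exact: count_bound.
by case/andP: (perc_prob_in01 (Gf u) E p01).
Qed.

End FiniteGraphs.

Lemma measurable_edge i j (b : bool) : measurable [set G : RGraphM | G.1 i j = b].
Proof. by apply: sub_sigma_algebra; left; exists i, j, b. Qed.

Lemma measurable_root k : measurable [set G : RGraphM | G.2 = k].
Proof. by apply: sub_sigma_algebra; right; exists k. Qed.

Lemma measurable_adj a b : measurable [set G : RGraphM | adj G a b].
Proof.
case: (eqVneq a b) => [->|ne].
  rewrite (_ : [set G : RGraphM | adj G b b] = set0); first exact: measurable0.
  by apply/seteqP; split => G //=; rewrite /adj eqxx.
rewrite (_ : [set G : RGraphM | adj G a b] =
             [set G : RGraphM | G.1 (minn a b) (maxn a b) = true]).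
  exact: measurable_edge.
by apply/seteqP; split => G /=; rewrite /adj ne.
Qed.

Lemma measurable_inball k v : measurable [set G : RGraphM | inball G k v].
Proof.
elim: k v => [|k IH] v /=.
  rewrite (_ : [set G : RGraphM | v = groot G] = [set G : RGraphM | G.2 = v]).
    exact: measurable_root.
  by apply/seteqP; split => G /= h; rewrite /groot in h *; rewrite h.
rewrite (_ : [set G : RGraphM | inball G k v \/ (exists w, inball G k w /\ adj G w v)] =
   [set G : RGraphM | inball G k v] `|`
   \bigcup_w ([set G : RGraphM | inball G k w] `&` [set G : RGraphM | adj G w v])).
  apply: measurableU => //; apply: bigcupT_measurable => w.
  by apply: measurableI => //; exact: measurable_adj.
apply/seteqP; split => G /=.
  by case=> [h|[w [h1 h2]]]; [left|right; exists w].
by case=> [h|[w _ [h1 h2]]]; [left|right; exists w].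
Qed.

Lemma measurable_all (P : RGraph -> nat -> Prop) (s : seq nat) :
  (forall x, measurable [set G : RGraphM | P G x]) ->
  measurable [set G : RGraphM | forall x, x \in s -> P G x].
Proof.
move=> mP; elim: s => [|a s IH].
  rewrite (_ : [set G : RGraphM | forall x, x \in [::] -> P G x] = setT).
    exact: measurableT.
  by apply/seteqP; split => G //=.
rewrite (_ : [set G : RGraphM | forall x, x \in a :: s -> P G x] =
    [set G : RGraphM | P G a] `&` [set G : RGraphM | forall x, x \in s -> P G x]).
  exact: measurableI.
apply/seteqP; split => G /=.
  by move=> h; split => [|x xs]; apply: h; rewrite in_cons ?eqxx ?xs ?orbT.
by case=> h1 h2 x; rewrite in_cons => /orP[/eqP ->|/h2].
Qed.

(* big_ball is the countable union, over the witness sequences s, of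
   finite intersections of balls *)
Lemma measurable_big_ball r D : measurable (big_ball r D : set RGraphM).
Proof.
pose F k := match unpickle k with
  | Some s => if uniq s && (D < size s)%N
              then [set G : RGraphM | forall x, x \in s -> inball G (r + r) x]
              else set0
  | None => set0 end.
rewrite (_ : big_ball r D = \bigcup_k F k).
  apply: bigcupT_measurable => k; rewrite /F.
  case: (unpickle k) => [s|]; last exact: measurable0.
  case: ifP => _; last exact: measurable0.
  by apply: measurable_all => x; exact: measurable_inball.
apply/seteqP; split => G /=.
  case=> s [us ss hs]; exists (pickle s) => //; rewrite /F pickleK us ss.
  exact: hs.
case=> k _; rewrite /F; case: (unpickle k) => [s|] //.
by case: ifP => // /andP[us ss] hs; exists s.
Qed.

Lemma measurable_locally_finite : measurable [set G : RGraphM | locally_finite G].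
Proof.
rewrite (_ : [set G : RGraphM | locally_finite G] =
  \bigcap_v \bigcup_n \bigcap_w
     (if (w < n)%N then setT else ~` [set G : RGraphM | adj G v w])).
  apply: bigcapT_measurable => v; apply: bigcupT_measurable => n.
  apply: bigcapT_measurable => w; case: ifP => _; first exact: measurableT.
  by apply: measurableC; exact: measurable_adj.
apply/seteqP; split => G /=.
  move=> lf v _; have [n hn] := lf v; exists n => // w _.
  by case: ifP => // hw /= ha; move: (hn _ ha); rewrite hw.
move=> h v; have [n _ hn] := h v I; exists n => w ha.
by move: (hn w I); case: ifP => // _ /=; apply.
Qed.

(* The events big_ball r D decrease in D and their
   intersection only contains graphs that are not locally finite, a null
   set; by continuity from above their measure tends to 0. *)
Lemma big_ball_mono r D D' G : (D <= D')%N -> big_ball r D' G -> big_ball r D G.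
Proof. by move=> h [s [us ss hs]]; exists s; split => //; apply: leq_ltn_trans ss. Qed.

Lemma not_big_ball r G : locally_finite G -> exists D, ~ big_ball r D G.
Proof.
move=> lf; have [N hN] := ball_bounded (r + r) lf; exists N => -[s [us ss hs]].
have : (size s <= size (iota 0 N))%N.
  by apply: uniq_leq_size => // x /hs /hN hx; rewrite mem_iota.
by rewrite size_iota; lia.
Qed.

Lemma big_ball_rare (R : realType) (mu : probability RGraphM R) r :
  mu [set G : RGraphM | locally_finite G] = 1%E ->
  forall delta : R, 0 < delta ->
  exists D, (mu (big_ball r D : set RGraphM) <= delta%:E)%E.
Proof.
move=> hLF delta d0.
have mB := measurable_big_ball r.
have cap0 : mu (\bigcap_D (big_ball r D : set RGraphM)) = 0%E.
  apply/eqP; rewrite eq_le measure_ge0 andbT.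
  have <- : (mu (~` [set G : RGraphM | locally_finite G]) = 0)%E.
    by rewrite probability_setC ?hLF ?subee //; exact: measurable_locally_finite.
  apply: le_measure; rewrite ?inE //; first exact: bigcapT_measurable.
    exact: measurableC measurable_locally_finite.
  move=> G hG /= lf; have [D hD] := not_big_ball r lf; exact: hD (hG D I).
have decr : {homo (fun D => (big_ball r D : set RGraphM)) : n m / (n <= m)%N >-> (m <= n)%O}.
  by move=> a b ab; rewrite subsetEset => G; apply: big_ball_mono.
have := @nonincreasing_cvg_mu _ _ _ mu (fun D => (big_ball r D : set RGraphM))
  (le_lt_trans (probability_le1 mu (mB 0%N)) (ltry 1)) mB (bigcapT_measurable mB) decr.
rewrite [X in _ --> X](_ : _ = 0%E); last exact: cap0.
move=> /fine_cvgP[fin /cvgrPdist_lt /(_ _ d0) close].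
have [N _ HN] := filterI fin close; have [/= fN hN] := HN N (leqnn N).
exists N; rewrite -(fineK fN) lee_fin; move: hN; rewrite sub0r normrN.
by move=> /ltW; apply: le_trans; apply: ler_norm.
Qed.

(* Each of the three functions of the rooted graph in the
   finite inequality only depends on a ball of the root: P(Q_r) on the
   (r+R0)-ball, P(E) on the R0-ball and big_ball_ind on the 2r-ball. *)
Section LocalContinuity.
Variable R : realType.
Variable E : RGraph -> Prop.
Variable R0 : nat.
Hypothesis E_local : forall G H, ball_iso R0 G H -> (E G <-> E H).
Variable p : R.
Hypothesis p01 : 0 <= p <= 1.

Lemma continuous_perc_Qball r :
  bounded_local_continuous (fun G => perc_prob p G (Qball E r G)).
Proof.
split.
  exists 1 => G _; have /andP[h0 h1] := perc_prob_in01 G (Qball E r G) p01.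
  by rewrite ger0_norm.
move=> G lfG eps eps0; exists (r + R0) => H lfH [phi [psi bi]].
have [N1 h1] := ball_bounded (r + R0) lfG; have [N2 h2] := ball_bounded (r + R0) lfH.
have b1 v : inball G (r + R0) v -> (v < (maxn N1 N2).+1)%N by move=> /h1; lia.
have b2 v : inball H (r + R0) v -> (v < (maxn N1 N2).+1)%N by move=> /h2; lia.
rewrite (perc_prob_box E_local p (leqnn _) b1) (perc_prob_box E_local p (leqnn _) b2).
by rewrite (box_prob_iso E_local p (leqnn _) bi b1 b2) subrr normr0.
Qed.

Lemma continuous_perc_E : bounded_local_continuous (fun G => perc_prob p G E).
Proof.
rewrite (_ : (fun G => perc_prob p G E) = (fun G => perc_prob p G (Qball E 0 G))).
  exact: continuous_perc_Qball.
by apply: funext => G; rewrite perc_prob_Qball0.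
Qed.

End LocalContinuity.

Lemma big_ball_iso r D G H phi psi :
  ball_iso_by (r + r) G H phi psi -> big_ball r D G -> big_ball r D H.
Proof.
case=> _ fK _ _ [s [us ss hs]]; exists (map phi s); split.
- rewrite map_inj_in_uniq // => x y /hs hx /hs hy e.
  by rewrite -(fK _ hx).2 -(fK _ hy).2 e.
- by rewrite size_map.
- by move=> x /mapP[y /hs hy ->]; case: (fK _ hy).
Qed.

Lemma continuous_big_ball_ind (R : realType) r D :
  bounded_local_continuous (big_ball_ind R r D).
Proof.
split.
  by exists 1 => G _; rewrite /big_ball_ind; case: ifP; rewrite ?normr1 ?normr0.
move=> G _ eps eps0; exists (r + r) => H _ [phi [psi bi]].
suff -> : big_ball_ind R r D H = big_ball_ind R r D G by rewrite subrr normr0.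
rewrite /big_ball_ind; congr (if _ then _ else _); apply/asboolP/asboolP.
  exact: big_ball_iso (ball_iso_by_sym bi).
exact: big_ball_iso bi.
Qed.

Lemma local_limit_le (R : realType) Gs (mu : probability RGraphM R)
    (f g h : RGraph -> R) (c : R) :
  local_limit Gs mu -> bounded_local_continuous f ->
  bounded_local_continuous g -> bounded_local_continuous h ->
  (forall n, \sum_(v < n) f (fin_rgraph (Gs n) n v) <=
     \sum_(v < n) g (fin_rgraph (Gs n) n v) + c * \sum_(v < n) h (fin_rgraph (Gs n) n v)) ->
  Rintegral mu setT f <= Rintegral mu setT g + c * Rintegral mu setT h.
Proof.
move=> [_ conv] cf cg ch fin.
apply: (ler_cvg_to (conv _ cf) (cvgD (conv _ cg) (cvgMl_tmp (a := c) (conv _ ch)))).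
near=> n; rewrite !fctE /= mulrCA -mulrDr.
by apply: ler_wpM2l; [rewrite invr_ge0 | exact: fin].
Unshelve. all: by end_near.
Qed.

Lemma integral_in01 (R : realType) (mu : probability RGraphM R) (f : RGraph -> R) :
  (forall x, 0 <= f x <= 1) ->
  (\int[mu]_x (f x)%:E)%E = (Rintegral mu setT f)%:E.
Proof.
move=> h; rewrite /Rintegral fineK //.
have i0 : (0 <= \int[mu]_x (f x)%:E)%E.
  by apply: integral_ge0 => x _; rewrite lee_fin; case/andP: (h x).
have i1 : (\int[mu]_x (f x)%:E <= 1)%E.
  have -> : (1 = \int[mu]_x (cst 1%:E) x)%E.
    by rewrite integral_cst // mul1e; exact/esym/(probability_setT mu).
  rewrite !ge0_integralTE //; last by move=> x; rewrite lee_fin; case/andP: (h x).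
  apply: le_ereal_sup => _ [k hk <-]; exists k => // x.
  by apply: le_trans (hk x) _; rewrite lee_fin; case/andP: (h x).
by rewrite ge0_fin_numE // (le_lt_trans i1) // ltry.
Qed.

Lemma big_ball_ind_in01 (R : realType) r D G : 0 <= big_ball_ind R r D G <= 1.
Proof. by rewrite /big_ball_ind; case: ifP; rewrite ?lexx ?ler01. Qed.

Lemma integral_big_ball_ind (R : realType) (mu : probability RGraphM R) r D :
  (Rintegral mu setT (big_ball_ind R r D))%:E = mu (big_ball r D : set RGraphM).
Proof.
rewrite -integral_in01; last exact: big_ball_ind_in01.
rewrite (eq_integral (fun x => (\1_(big_ball r D : set RGraphM) x)%:E)).
  by rewrite integral_indic ?setIT //; exact: measurable_big_ball.
move=> x _; rewrite indicE /big_ball_ind; have [h|h] := pselect (big_ball r D x).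
  by rewrite mem_set // asboolT.
by rewrite memNset // asboolF.
Qed.

Unset Implicit Arguments.

(* Theorem 1.5.  Choose D so that mu(|B_2r(o)| > D) <= delta; the
   finite-graph inequality passes to the local limit. *)
Theorem mainTheorem15 (R : realType) (Gs : nat -> nat -> nat -> bool)
    (mu : probability RGraphM R) (E : RGraph -> Prop) :
  local_limit Gs mu -> local_event E ->
  forall delta : R, 0 < delta -> forall r : nat,
  exists D : nat, forall p : R, 0 <= p <= 1 ->
    (\int[mu]_G (perc_prob p G
        (fun Gp => exists u, inball G r u /\ E (reroot Gp u)))%:E
     <= D%:R%:E * \int[mu]_G (perc_prob p G E)%:E + delta%:E)%E.
Proof.
move=> lim [R0 E_local] delta d0 r.
have [D rare] := big_ball_rare r lim.1 d0.
exists D => p p01.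
have limit_ineq := local_limit_le lim
  (continuous_perc_Qball E_local p01 r) (continuous_big_ball_ind R r D)
  (continuous_perc_E E_local p01)
  (fun n => finite_graph_inequality E_local p01 r (Gs n) n D).
rewrite (@integral_in01 _ mu (fun G => perc_prob p G (Qball E r G)));
  last by move=> G; exact: perc_prob_in01.
rewrite (@integral_in01 _ mu (fun G => perc_prob p G E));
  last by move=> G; exact: perc_prob_in01.
rewrite -EFinM -EFinD lee_fin; apply: (le_trans limit_ineq).
by rewrite addrC lerD2l -lee_fin integral_big_ball_ind.
Qed.
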